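(* Let $G$ be a graph and $uv$ an edge of $G$. If $G$ admits a tree 3-spanner with 5-center $u,v$, then $G$ admits a $uv$-concentrated tree 3-spanner.
   Context: Graphs are finite, simple and loopless. A tree 3-spanner of $G$ is a spanning subgraph $T$ of $G$ that is a tree and satisfies $d_T(a,b)\le 3\,d_G(a,b)$ for all vertices $a,b$ of $G$. A 5-center of a tree $T$ is a pair of vertices $u,v$ that are adjacent in $T$ and such that every vertex of $T$ is within $T$-distance 2 of $u$ or of $v$. A tree 3-spanner $T$ of $G$ is $uv$-concentrated if all three of the following hold: (1) $u,v$ is a 5-center of $T$; (2) every $G$-neighbour $w$ of $u$ with $d_T(w,u)<d_T(w,v)$ is a $T$-neighbour of $u$; (3) every $G$-neighbour $w$ of $v$ with $d_T(w,v)<d_T(w,u)$ is a $T$-neighbour of $v$. *)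

From mathcomp Require Import all_boot.
Set Implicit Arguments. Unset Strict Implicit. Unset Printing Implicit Defensive.

Section Graphs.
Variable T : finType.

Definition simple_graph (e : rel T) : Prop := symmetric e /\ irreflexive e.

Fixpoint reach (e : rel T) (k : nat) (a b : T) : bool :=
  match k with
  | 0 => a == b
  | k'.+1 => reach e k' a b || [exists c, e a c && reach e k' c b]
  end.

(* graph distance: least k with a walk of length <= k; if b is unreachable
   from a the value is #|T| (never used in connected graphs) *)
Definition dist (e : rel T) (a b : T) : nat :=
  find (fun k => reach e k a b) (iota 0 #|T|).

(* spanning subgraph t of e that is a tree: connected, and with no
   simple cycle (of length >= 3) *)
Definition is_spanning_tree (e t : rel T) : Prop :=
  simple_graph t /\ subrel t e /\
  (forall a b, connect t a b) /\
  (forall c : seq T, ucycle t c -> size c <= 2).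

Definition tree_3_spanner (e t : rel T) : Prop :=
  is_spanning_tree e t /\ forall a b, dist t a b <= 3 * dist e a b.

Definition five_center (t : rel T) (u v : T) : Prop :=
  t u v /\ forall x, (dist t x u <= 2) || (dist t x v <= 2).

Definition concentrated (e t : rel T) (u v : T) : Prop :=
  tree_3_spanner e t /\ five_center t u v /\
  (forall w, e u w -> dist t w u < dist t w v -> t u w) /\
  (forall w, e v w -> dist t w v < dist t w u -> t v w).

End Graphs.

From mathcomp Require Import all_boot zify.
Set Implicit Arguments. Unset Strict Implicit. Unset Printing Implicit Defensive.

(* Root the tree at u. As v is a child of u and every vertex is within distance 2 of u or v,
   the tree has depth at most 3 and the vertices of depth 3 are grandchildren of v. Re-hang
   every vertex that is adjacent in G to its grandparent (which is u or v) on that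
   grandparent, unless it is already a child of v. New parents are old ancestors, so the
   result is again a spanning tree with 5-center u, v. In it every vertex still reaches its
   old parent and grandparent in at most 2 steps, which turns each old path of length at most
   3 through a common ancestor into a new path of length at most 3; and the G-neighbours of u
   (resp. v) on its own side are now its children. *)

Section Reach.
Variable T : finType.
Implicit Types (r s : rel T) (a b : T).

Lemma reachSE r k a b :
  reach r k.+1 a b = reach r k a b || [exists c, r a c && reach r k c b].
Proof. by []. Qed.

Lemma reachS r k a b : reach r k a b -> reach r k.+1 a b.
Proof. by move=> /= ->. Qed.

Lemma reach_leq r k m a b : k <= m -> reach r k a b -> reach r m a b.
Proof. by move=> /subnK <-; elim: (m - k) => //= n IH /IH ->. Qed.

Lemma reach0 r a : reach r 0 a a.
Proof. by rewrite /= eqxx. Qed.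

Lemma reach1 r a b : r a b -> reach r 1 a b.
Proof. by move=> rab /=; apply/orP; right; apply/existsP; exists b; rewrite rab /=. Qed.

Lemma reach1P r a b : reach r 1 a b -> a = b \/ r a b.
Proof. by case/orP=> [/eqP|/existsP [c /andP [rac /eqP <-]]]; [left|right]. Qed.

Lemma reach_cat r i j a b c : reach r i a b -> reach r j b c -> reach r (i + j) a c.
Proof.
elim: i a => [|i IH] a /=; first by move=> /eqP ->.
case/orP=> [rab rbc|/existsP [d /andP [rad rdb]] rbc]; first exact/reachS/IH.
by apply/orP; right; apply/existsP; exists d; rewrite rad (IH _ rdb).
Qed.

Lemma reach_sym r k a b : symmetric r -> reach r k a b -> reach r k b a.
Proof.
move=> rsym; elim: k a => [|k IH] a; first by rewrite /= eq_sym.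
case/orP=> [/IH/reachS //|/existsP [d /andP [rad rdb]]].
by rewrite -addn1; apply: reach_cat (IH _ rdb) (reach1 _); rewrite rsym.
Qed.

Lemma reach_path r a p : path r a p -> reach r (size p) a (last a p).
Proof.
elim: p a => [|y p IH] a /=; first by rewrite eqxx.
by case/andP=> ray rp; apply/orP; right; apply/existsP; exists y; rewrite ray IH.
Qed.

Lemma dist_leq r a b k : reach r k a b -> dist r a b <= k.
Proof.
move=> rk; rewrite /dist; case: (ltnP k #|T|) => [k_lt|le_k].
  rewrite leqNgt; apply/negP => /(before_find 0).
  by rewrite nth_iota // add0n rk.
by apply: leq_trans le_k; apply: leq_trans (find_size _ _) _; rewrite size_iota.
Qed.

(* A shortest walk has no repeated vertex, so its length is below #|T|. *)
Lemma reach_dist r a b : connect r a b -> reach r (dist r a b) a b.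
Proof.
case/connectP=> p rp ->; case: (shortenP rp) => q rq uniq_q _.
have q_lt : size q < #|T|.
  by have := max_card (mem (a :: q)); move/card_uniqP: uniq_q => ->.
have has_q : has (fun k => reach r k a (last a q)) (iota 0 #|T|).
  by apply/hasP; exists (size q); rewrite ?mem_iota ?reach_path.
have := nth_find 0 has_q; rewrite nth_iota ?add0n //.
by move: has_q; rewrite has_find size_iota.
Qed.

Lemma dist_leqE r a b k : connect r a b -> (dist r a b <= k) = reach r k a b.
Proof.
move=> rab; apply/idP/idP; last exact: dist_leq.
by move=> le_k; apply: reach_leq le_k (reach_dist rab).
Qed.

Lemma reach_stretch r s c k a b :
  (forall x y, r x y -> reach s c x y) -> reach r k a b -> reach s (c * k) a b.
Proof.
move=> rs; elim: k a => [|k IH] a /=; first by rewrite muln0.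
case/orP=> [/IH|/existsP [d /andP [rad /IH sdb]]].
  by apply: reach_leq; rewrite leq_mul2l leqnSn orbT.
by rewrite mulnS; apply: reach_cat (rs _ _ rad) sdb.
Qed.

Lemma dist_stretch r s c a b : connect r a b ->
  (forall x y, r x y -> reach s c x y) -> dist s a b <= c * dist r a b.
Proof. by move=> rab rs; apply/dist_leq/(reach_stretch rs)/reach_dist. Qed.

Lemma adj_of_dist_lt r a b c : connect r a b -> a != b -> reach r 2 a c ->
  dist r a b < dist r a c -> r a b.
Proof.
move=> rab ab /dist_leq rac lt_bc.
have : reach r 1 a b by rewrite -dist_leqE //; move: (leq_trans lt_bc rac).
by case/reach1P=> // eq_ab; rewrite eq_ab eqxx in ab.
Qed.

End Reach.

Section ParentRelation.
Variables (T : finType) (Q : T -> T) (root : T).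

Definition parent_rel x y := (x != root) && (y == Q x) || (y != root) && (x == Q y).

Lemma parent_rel_sym : symmetric parent_rel.
Proof. by move=> x y; rewrite /parent_rel orbC. Qed.

Lemma parent_relQ x : x != root -> parent_rel x (Q x).
Proof. by move=> x_root; rewrite /parent_rel x_root eqxx. Qed.

Lemma parent_rel_sub (r : rel T) : symmetric r ->
  (forall x, x != root -> r x (Q x)) -> subrel parent_rel r.
Proof.
move=> rsym rQ x y /orP [] /andP [not_root /eqP ->]; first exact: rQ.
by rewrite rsym; apply: rQ.
Qed.

Variable rk : T -> nat.
Hypothesis rkQ : forall x, x != root -> rk (Q x) < rk x.

Lemma parent_rel_irr : irreflexive parent_rel.
Proof.
move=> x; rewrite /parent_rel orbb; apply/negP => /andP [x_root /eqP xQ].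
by have := rkQ x_root; rewrite -xQ ltnn.
Qed.

Lemma connect_parent_root x : connect parent_rel x root.
Proof.
elim: {x}(rk x) {-2}x (leqnn (rk x)) => [|n IH] x rk_x;
  case: (eqVneq x root) => [->|x_root]; rewrite ?connect0 //.
  by have := rkQ x_root; rewrite ltnNge (leq_trans rk_x).
apply: connect_trans (connect1 (parent_relQ x_root)) (IH _ _).
by rewrite -ltnS (leq_trans (rkQ x_root)).
Qed.

Lemma connect_parent_rel x y : connect parent_rel x y.
Proof.
apply: connect_trans (connect_parent_root x) _.
by rewrite (sym_connect_sym parent_rel_sym) connect_parent_root.
Qed.

(* On a cycle, both neighbours of a vertex of maximal rank would be its parent. *)
Lemma parent_rel_acyclic (c : seq T) : ucycle parent_rel c -> size c <= 2.
Proof.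
case: c => [//|z0 c0] /andP [cyc_c uniq_c]; rewrite leqNgt; apply/negP => size_c.
have [z zc max_z] := arg_maxnP rk (mem_head z0 c0).
have [i s' rot_c] := rot_to zc.
have size_s' : 1 < size s' by move: size_c; rewrite -(size_rot i) rot_c.
case: s' rot_c size_s' => [|y1 [|y2 s]] // rot_c _.
have s_sub y : y \in [:: y1, y2 & s] -> rk y <= rk z.
  by move=> ys; apply: max_z; change (y \in z0 :: c0); rewrite -(mem_rot i) rot_c inE ys orbT.
have nbr_par y : y \in [:: y1, y2 & s] -> parent_rel z y -> y = Q z.
  move=> ys /orP [] /andP [not_root /eqP //] z_Qy.
  by have := rkQ not_root; rewrite -z_Qy ltnNge s_sub.
move: cyc_c uniq_c; rewrite -(rot_cycle i) -(rot_uniq i) rot_c /=.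
case/andP=> zy1; rewrite rcons_path => /and3P [_ _ yz].
case/and3P=> _ y1_s _.
have ys : last y2 s \in [:: y1, y2 & s] by rewrite inE mem_last orbT.
have zy : parent_rel z (last y2 s) by rewrite parent_rel_sym.
move: y1_s; rewrite (nbr_par _ (mem_head _ _) zy1) -(nbr_par _ ys zy).
by rewrite mem_last.
Qed.

End ParentRelation.

Section RootedTree.
Variables (T : finType) (t : rel T) (u : T).
Hypothesis tsym : symmetric t.
Hypothesis tirr : irreflexive t.
Hypothesis tconn : forall a b, connect t a b.
Hypothesis tacyc : forall c : seq T, ucycle t c -> size c <= 2.

Definition lev x := dist t x u.
Definition par x := odflt x [pick y | t x y && (lev y == (lev x).-1)].

Lemma lev_leqE x k : (lev x <= k) = reach t k x u.
Proof. exact: dist_leqE. Qed.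

Lemma lev_eq0 x : (lev x == 0) = (x == u).
Proof. by rewrite -leqn0 lev_leqE. Qed.

Lemma lev_u : lev u = 0.
Proof. by apply/eqP; rewrite lev_eq0. Qed.

Lemma lev_edge x y : t x y -> lev x <= (lev y).+1.
Proof.
move=> txy; rewrite lev_leqE -add1n.
by apply: reach_cat (reach1 txy) _; rewrite -lev_leqE.
Qed.

Lemma par_spec x : x != u -> t x (par x) /\ lev x = (lev (par x)).+1.
Proof.
move=> xu; have lev_pos : 0 < lev x by rewrite lt0n lev_eq0.
have [y /andP [txy /eqP lev_y]] : exists y, t x y && (lev y == (lev x).-1).
  have : reach t (lev x).-1.+1 x u by rewrite prednK // -lev_leqE.
  rewrite reachSE -lev_leqE => /orP [|/existsP [y /andP [txy]]]; first lia.
  rewrite -lev_leqE => le_y; exists y; rewrite txy eqn_leq le_y /=.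
  by have := lev_edge txy; lia.
rewrite /par; case: pickP => [z /andP [txz /eqP ->]|/(_ y)]; last by rewrite txy lev_y eqxx.
by rewrite prednK.
Qed.

Lemma par_u : par u = u.
Proof.
rewrite /par; case: pickP => [y /andP [tuy /eqP]|//].
by rewrite lev_u => /eqP; rewrite lev_eq0 => /eqP yu; rewrite yu tirr in tuy.
Qed.

Lemma lev_par x : lev (par x) = (lev x).-1.
Proof.
case: (eqVneq x u) => [->|xu]; first by rewrite par_u lev_u.
by case: (par_spec xu) => _ ->.
Qed.

Lemma lev_iter_par i x : lev (iter i par x) = lev x - i.
Proof. by elim: i => [|i IH]; rewrite ?subn0 // iterS lev_par IH subnS. Qed.

Lemma lev_par_lt x : x != u -> lev (par x) < lev x.
Proof. by move=> xu; rewrite lev_par ltn_predL lt0n lev_eq0. Qed.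

Lemma same_lev_path k p q : lev p = k -> lev q = k -> p != q ->
  exists s, [/\ path t p s, last p s = q, uniq (p :: s), 2 <= size s &
                all (fun z => lev z <= k) s].
Proof.
elim: k p q => [|k IH] p q lev_p lev_q pq.
  move/eqP: lev_p; move/eqP: lev_q; rewrite !lev_eq0 => /eqP q_u /eqP p_u.
  by rewrite p_u q_u eqxx in pq.
have pu : p != u by rewrite -lev_eq0 lev_p.
have qu : q != u by rewrite -lev_eq0 lev_q.
have [tp] := par_spec pu; rewrite lev_p => -[/esym lev_pp].
have [tq] := par_spec qu; rewrite lev_q => -[/esym lev_qq].
have neq_pq z : lev z <= k -> (z != p) && (z != q).
  move=> lev_z; apply/andP.
  by split; apply: contraTneq lev_z => ->; rewrite ?lev_p ?lev_q ltnn.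
case: (eqVneq (par p) (par q)) => [par_pq|/(IH _ _ lev_pp lev_qq)].
  have /andP [pp_p pp_q] := neq_pq _ (eq_leq lev_pp).
  exists [:: par p; q]; split=> //=.
  - by rewrite tp par_pq tsym tq.
  - by rewrite !inE negb_or pq eq_sym pp_p pp_q.
  - by rewrite lev_pp lev_q leqnSn leqnn.
case=> s [ps last_s uniq_s _ lev_s].
have lev_ps z : z \in par p :: s -> lev z <= k.
  by rewrite inE => /orP [/eqP ->|/(allP lev_s)] //; rewrite lev_pp.
exists (par p :: rcons s q); split.
- by rewrite /= tp rcons_path ps last_s tsym tq.
- by rewrite /= last_rcons.
- rewrite cons_uniq -rcons_cons rcons_uniq uniq_s andbT mem_rcons inE negb_or pq /=.
  by apply/andP; split; apply/negP => /lev_ps /neq_pq; rewrite eqxx ?andbF.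
- by rewrite /= size_rcons.
- rewrite /= lev_pp leqnSn all_rcons lev_q leqnn /=.
  by apply/allP => z /(allP lev_s) /leqW.
Qed.

Lemma edge_lev_neq x y : t x y -> lev x != lev y.
Proof.
move=> txy; apply/eqP => lev_xy.
have xy : x != y by apply: contraTneq txy => ->; rewrite tirr.
have [s [xs last_s uniq_s size_s _]] := same_lev_path lev_xy erefl xy.
have : ucycle t (x :: s) by rewrite /ucycle uniq_s andbT /= rcons_path xs last_s tsym.
by move/tacyc; rewrite /= ltnNge size_s.
Qed.

Lemma par_unique y p : y != u -> t y p -> lev y = (lev p).+1 -> p = par y.
Proof.
move=> yu typ lev_yp; have [typ' lev_y] := par_spec yu.
apply/eqP; apply: contraT => neq_p.
have [s [ps last_s uniq_s size_s lev_s]] : exists s, [/\ path t p s, last p s = par y,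
    uniq (p :: s), 2 <= size s & all (fun z => lev z <= lev p) s].
  by apply: same_lev_path => //; apply: succn_inj; rewrite -lev_y.
have y_ps : y \notin p :: s.
  rewrite inE negb_or; apply/andP; split.
    by apply: contraTneq typ => ->; rewrite tirr.
  by apply/negP => /(allP lev_s); rewrite lev_yp ltnn.
have : ucycle t (y :: p :: s).
  by rewrite /ucycle (cons_uniq y) y_ps uniq_s /= typ rcons_path ps last_s tsym !andbT.
by move/tacyc; rewrite /= ltnNge ltnW.
Qed.

Lemma t_parent_rel : subrel t (parent_rel par u).
Proof.
have up x y : t x y -> lev y < lev x -> (x != u) && (y == par x).
  move=> txy lt_yx; have xu : x != u by rewrite -lev_eq0 -lt0n (leq_ltn_trans _ lt_yx).
  have lev_xy : lev x = (lev y).+1 by apply/eqP; rewrite eqn_leq lt_yx lev_edge.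
  by rewrite xu -(par_unique xu txy lev_xy) eqxx.
move=> x y txy; have := edge_lev_neq txy; rewrite neq_ltn => /orP [lt_xy|lt_yx].
  by apply/orP; right; apply: up; rewrite // tsym.
by apply/orP; left; apply: up.
Qed.

Lemma reach_par_meet k a b : reach t k a b ->
  exists i j, i + j <= k /\ iter i par a = iter j par b.
Proof.
elim: k a => [|k IH] a; first by move/eqP->; exists 0, 0.
rewrite reachSE => /orP [/IH [i [j [le_ij meet]]]|/existsP [d /andP [tad /IH]]].
  by exists i, j; split; first exact: leqW.
case=> i [j [le_ij meet]]; case/orP: (t_parent_rel tad) => /andP [_ /eqP ad].
  by exists i.+1, j; rewrite iterSr -ad; split.
by exists i, j.+1; rewrite addnS ltnS iterS -meet -iterS iterSr -ad; split.
Qed.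

Section Rehang.
Variables (e : rel T) (v : T).
Hypothesis esym : symmetric e.
Hypothesis eirr : irreflexive e.
Hypothesis te : subrel t e.
Hypothesis tspan : forall a b, dist t a b <= 3 * dist e a b.
Hypothesis t5 : five_center t u v.

Lemma v_neq_u : v != u.
Proof. by apply: contraTneq (proj1 t5) => ->; rewrite tirr. Qed.

Lemma lev_v : lev v = 1.
Proof.
have : lev v <= 1 by rewrite lev_leqE reach1 // tsym (proj1 t5).
by rewrite leq_eqVlt ltnS leqn0 lev_eq0 (negbTE v_neq_u) orbF => /eqP.
Qed.

Lemma par_v : par v = u.
Proof. by apply/eqP; rewrite -lev_eq0 lev_par lev_v. Qed.

Lemma lev_leq3 x : lev x <= 3.
Proof.
case/orP: (proj2 t5 x) => [le2|]; first exact: leq_trans le2 _.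
rewrite dist_leqE // lev_leqE => reach_xv.
by apply: reach_cat reach_xv (reach1 _); rewrite tsym (proj1 t5).
Qed.

Lemma par2_lev2 x : lev x <= 2 -> par (par x) = u.
Proof. by move=> le2; apply/eqP; rewrite -lev_eq0 !lev_par; lia. Qed.

Lemma par2_lev3 x : lev x = 3 -> par (par x) = v.
Proof.
move=> lev_x; have := proj2 t5 x; rewrite -[dist t x u]/(lev x) lev_x /= dist_leqE //.
case/reach_par_meet=> i [j [le_ij meet]].
have := congr1 lev meet; rewrite !lev_iter_par lev_x lev_v => lev_ij.
have [i2 j0] : i = 2 /\ j = 0 by lia.
by move: meet; rewrite i2 j0.
Qed.

Definition par' x := if (par x != v) && e (par (par x)) x then par (par x) else par x.
Definition t' := parent_rel par' u.
Let t'_sym : symmetric t' := @parent_rel_sym _ par' u.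

Lemma par'_cases x : par' x = par x \/ par' x = par (par x).
Proof. by rewrite /par'; case: ifP; [right|left]. Qed.

Lemma par'_lt x : x != u -> lev (par' x) < lev x.
Proof.
move=> xu; have := lev_par_lt xu.
by case: (par'_cases x) => ->; rewrite ?lev_par //; lia.
Qed.

Lemma par'_par x : par' (par x) = par (par x).
Proof.
rewrite /par'; have := lev_leq3 x; rewrite leq_eqVlt ltnS.
case/orP=> [/eqP/par2_lev3 ->|/par2_lev2 ->]; first by rewrite eqxx.
by rewrite par_u; case: ifP.
Qed.

Lemma par'_of_par_par a b : par a = par (par b) -> par' a = par a.
Proof.
move=> ab; case: (eqVneq (par a) u) => [au|].
  by case: (par'_cases a) => ->; rewrite ?au ?par_u.
rewrite ab => pb_u; have lev_b : lev b = 3.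
  apply/eqP; rewrite eqn_leq lev_leq3 ltnNge.
  by apply: contra pb_u => /par2_lev2 ->.
by rewrite /par' ab par2_lev3 // eqxx.
Qed.

Lemma e_par' x : x != u -> e x (par' x).
Proof.
move=> xu; rewrite /par'; case: ifP => [/andP [_]|_]; first by rewrite esym.
exact/te/(par_spec xu).1.
Qed.

Lemma t'_tree : is_spanning_tree e t'.
Proof.
split; first by split; [exact: parent_rel_sym | exact: parent_rel_irr par'_lt].
split; first exact: parent_rel_sub esym e_par'.
split; [exact: connect_parent_rel par'_lt | exact: parent_rel_acyclic par'_lt].
Qed.

Lemma reach_par' x : reach t' 1 x (par' x).
Proof.
case: (eqVneq x u) => [->|xu]; last exact/reach1/parent_relQ.
by case: (par'_cases u) => ->; rewrite !par_u; apply: reachS (reach0 _ _).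
Qed.

Lemma reach_par x : reach t' 2 x (par x).
Proof.
case: (par'_cases x) => par'_x; first by rewrite -par'_x reachS ?reach_par'.
apply: (reach_cat (reach_par' x)); rewrite par'_x -par'_par.
exact/(reach_sym t'_sym)/reach_par'.
Qed.

Lemma reach_par2 x : reach t' 2 x (par (par x)).
Proof.
case: (par'_cases x) => par'_x; last by rewrite -par'_x reachS ?reach_par'.
by apply: (reach_cat (reach_par' x)); rewrite par'_x -par'_par reach_par'.
Qed.

Lemma reach_iter_par j x : j <= 3 -> reach t' 3 x (iter j par x).
Proof.
case: j => [|[|[|[|//]]]] _.
- exact: reach_leq _ (reach0 _ _).
- exact: reach_leq _ (reach_par x).
- exact: reach_leq _ (reach_par2 x).
change (reach t' (2 + 1) x (par (par (par x)))).
by apply: (reach_cat (reach_par2 x)); rewrite -(par'_par (par x)) reach_par'.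
Qed.

Lemma reach_siblings a b : par a = par b -> reach t' 3 a b.
Proof.
move=> ab; apply: (reach_cat (reach_par' a)); apply: (reach_sym t'_sym).
by case: (par'_cases a) => ->; rewrite ab ?reach_par ?reach_par2.
Qed.

Lemma reach_uncle a b : par a = par (par b) -> reach t' 3 a b.
Proof.
move=> ab; apply: (reach_cat (reach_par' a)); apply: (reach_sym t'_sym).
by rewrite (par'_of_par_par ab) ab reach_par2.
Qed.

Lemma reach3_of_meet i j a b : i + j <= 3 -> iter i par a = iter j par b ->
  reach t' 3 a b.
Proof.
wlog le_ij : i j a b / i <= j.
  move=> wlog_ij le3 meet; case: (leqP i j) => [le_ij|/ltnW le_ji].
    exact: wlog_ij _ _ _ _ le_ij le3 meet.
  by apply: (reach_sym t'_sym); apply: (wlog_ij j i); rewrite // addnC.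
case: i le_ij => [|[|i]] le_ij le3 meet.
- by rewrite /= in meet; rewrite meet; apply/(reach_sym t'_sym)/reach_iter_par.
- by case: j le_ij le3 meet => [|[|[|j]]] //= _ _; [apply: reach_siblings | apply: reach_uncle].
by move: le3; lia.
Qed.

Lemma reach3_of_edge a b : e a b -> reach t' 3 a b.
Proof.
move=> eab; have : dist t a b <= 3.
  exact: leq_trans (tspan a b) (leq_mul (leqnn 3) (dist_leq (reach1 eab))).
by rewrite dist_leqE // => /reach_par_meet [i [j [le3 meet]]]; apply: reach3_of_meet le3 meet.
Qed.

Lemma t'_spanner : tree_3_spanner e t'.
Proof.
split=> [|a b]; first exact: t'_tree.
apply: dist_stretch reach3_of_edge.
by apply: connect_sub (tconn a b) => x y /te /connect1.
Qed.

Lemma t'_five_center : five_center t' u v.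
Proof.
split.
  rewrite /t' /parent_rel eqxx v_neq_u /=.
  by case: (par'_cases v) => ->; rewrite par_v ?par_u.
move=> x; have := lev_leq3 x; rewrite leq_eqVlt ltnS.
case/orP=> [/eqP/par2_lev3 par2_x|/par2_lev2 par2_x].
  by apply/orP; right; apply: dist_leq; rewrite -par2_x reach_par2.
by apply/orP; left; apply: dist_leq; rewrite -par2_x reach_par2.
Qed.

Lemma adj_u_side w : e u w -> t' w u \/ reach t' 2 w v.
Proof.
move=> euw; have wu : w != u by apply: contraTneq euw => ->; rewrite eirr.
have := lev_leq3 w; rewrite leq_eqVlt ltnS.
case/orP=> [/eqP/par2_lev3 par2_w|/par2_lev2 par2_w].
  by right; rewrite -par2_w reach_par2.
case: (eqVneq (par w) v) => [<-|par_w]; first by right; apply: reach_par.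
left; suff <- : par' w = u by exact: parent_relQ.
by rewrite /par' par2_w par_w euw.
Qed.

Lemma adj_v_side w : e v w -> w != u -> t' w v \/ reach t' 2 w u.
Proof.
move=> evw wu; have := lev_leq3 w; rewrite leq_eqVlt ltnS.
case/orP=> [/eqP lev_w|/par2_lev2 par2_w]; last by right; rewrite -par2_w reach_par2.
left; suff <- : par' w = v by exact: parent_relQ.
have par_w : par w != v.
  by apply/eqP => par_w; move: (lev_par w); rewrite par_w lev_v lev_w.
by rewrite /par' (par2_lev3 lev_w) par_w evw.
Qed.

Lemma concentrated_t' : concentrated e t' u v.
Proof.
split; first exact: t'_spanner.
split; first exact: t'_five_center.
have t'_conn := connect_parent_rel par'_lt.
split=> w ew lt_w; rewrite /t' parent_rel_sym.
  have wu : w != u by apply: contraTneq ew => ->; rewrite eirr.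
  case: (adj_u_side ew) => // reach_wv.
  exact: adj_of_dist_lt (t'_conn w u) wu reach_wv lt_w.
case: (eqVneq w u) => [->|wu]; first exact: (proj1 t'_five_center).
have wv : w != v by apply: contraTneq ew => ->; rewrite eirr.
case: (adj_v_side ew wu) => // reach_wu.
exact: adj_of_dist_lt (t'_conn w v) wv reach_wu lt_w.
Qed.

End Rehang.
End RootedTree.

Theorem lemma2 (T : finType) (e : rel T) (u v : T) :
  simple_graph e -> e u v ->
  (exists t : rel T, tree_3_spanner e t /\ five_center t u v) ->
  exists t : rel T, concentrated e t u v.
Proof.
move=> [esym eirr] _ [t [[[[tsym tirr] [te [tconn tacyc]]] tspan] t5]].
by exists (t' t u e v); apply: concentrated_t'.
Qed.
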